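(* The Norton–Sakuma algebra $V_{4A}$ has infinitely many maximal associative subalgebras. However, it has only two non-trivial maximal associative subalgebras.
   Context: $V_{4A}$ is the $5$-dimensional real commutative algebra (with identity and positive definite associative inner product) generated by two $2A$-axes $a_t,a_g$ of the Griess algebra whose involutions $t,g$ have product $tg$ in Monster class $4A$; equivalently, the algebra generated by two Majorana axes (idempotents of length $1$, $\mathrm{ad}$-diagonalizable with eigenvalues in $\{0,1,\frac14,\frac1{32}\}$) whose Majorana involutions have product of order $4$ and with $(a_t,a_g)=\frac1{32}$. It has basis $a_0,a_1,a_2,a_3,v$ with $a_i=\psi(t\rho^i)$ type axes, products $a_i\cdot a_i=a_i$, $v\cdot v=v$, $a_0\cdot a_1=\frac1{64}(3a_0+3a_1+a_2+a_3-3v)$, $a_0\cdot v=\frac1{16}(5a_0-2a_1-a_2-2a_3+3v)$, $a_0\cdot a_2=0$, and the remaining products obtained from the dihedral symmetry of order $8$ permuting indices $i\in\mathbb Z/4$ (generated by $i\mapsto -i$ and $i\mapsto 1-i$) and fixing $v$; $(a_i,a_i)=1$, $(a_i,a_{i\pm1})=\frac1{32}$, $(a_i,a_{i+2})=0$, $(a_i,v)=\frac38$, $(v,v)=2$. For a non-zero idempotent $x\neq\mathbb 1$, $V_x$ is the span of $\{x,\mathbb 1-x\}$; an associative subalgebra is trivial if it equals some $V_x$ (or the subalgebra generated by $0$ or $\mathbb 1$), non-trivial otherwise. Maximal associative means maximal under inclusion among associative subalgebras. *)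

From HB Require Import structures.
From mathcomp Require Import all_boot all_order all_algebra.
From mathcomp Require Import reals.
Set Implicit Arguments. Unset Strict Implicit. Unset Printing Implicit Defensive.
Import Order.TTheory GRing.Theory Num.Theory.
Local Open Scope ring_scope.

Section V4A.
Variable R : realType.

(* Underlying vector space: R^5, coordinates w.r.t. basis a_0,a_1,a_2,a_3,v
   (index 4 is v). *)
Definition V4A := 'rV[R]_5.

(* coefficient of basis vector k in the product (basis i) * (basis j) *)
Definition av_coef (i k : nat) : R :=
  if k == 4%N then 3 / 16
  else match ((k + 4 - i) %% 4)%N with
       | 0%N => 5 / 16
       | 2%N => - (1 / 16)
       | _ => - (2 / 16)
       end.

Definition v4a_coef (i j k : nat) : R :=
  if (i == 4%N) && (j == 4%N) then (k == 4%N)%:R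
  else if i == 4%N then av_coef j k
  else if j == 4%N then av_coef i k
  else match ((j + 4 - i) %% 4)%N with
       | 0%N => (k == i)%:R                     (* a_i a_i = a_i *)
       | 2%N => 0                               (* a_i a_{i+2} = 0 *)
       | _ => if k == 4%N then - (3 / 64)       (* a_i a_{i+-1} *)
              else if (k == i) || (k == j) then 3 / 64 else 1 / 64
       end.

Definition v4a_mul (x y : V4A) : V4A :=
  \row_(k < 5) \sum_(i < 5) \sum_(j < 5) x 0 i * y 0 j * v4a_coef i j k.

Definition is_identity (e : V4A) : Prop := forall x, v4a_mul e x = x.

Definition idempotent (x : V4A) : Prop := v4a_mul x x = x.

Definition is_subalgebra (U : {vspace V4A}) : Prop :=
  forall x y, x \in U -> y \in U -> v4a_mul x y \in U.

Definition is_assoc_subalgebra (U : {vspace V4A}) : Prop :=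
  is_subalgebra U /\
  forall x y z, x \in U -> y \in U -> z \in U ->
    v4a_mul (v4a_mul x y) z = v4a_mul x (v4a_mul y z).

Definition is_max_assoc_subalgebra (U : {vspace V4A}) : Prop :=
  is_assoc_subalgebra U /\
  forall W : {vspace V4A}, is_assoc_subalgebra W -> (U <= W)%VS -> W = U.

Definition is_trivial_subalgebra (U : {vspace V4A}) : Prop :=
  exists e : V4A, is_identity e /\
    [\/ U = 0%VS, U = <[e]>%VS |
        exists x : V4A, [/\ idempotent x, x != 0, x != e &
                            U = <<[:: x; e - x]>>%VS]].

End V4A.

From Pilot Require Import Defs.
From HB Require Import structures.
From mathcomp Require Import all_boot all_order all_algebra.
From mathcomp Require Import reals.
From mathcomp Require Import ring lra zify.
Import Order.TTheory GRing.Theory Num.Theory.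
Set Implicit Arguments. Unset Strict Implicit. Unset Printing Implicit Defensive.
Local Open Scope ring_scope.

(* The form [(x, y)] of [V4A] is positive definite and associative, so
   [(x x, 1) = (x, x) > 0] for [x <> 0]: unital associative subalgebras have no
   nilpotents and split into orthogonal idempotents.  Solving [x x = x], a
   nonzero idempotent has length [(x, 1)] equal to 1 exactly when it is an axis
   [a_i], and at least [12/7] otherwise.  In a 3-dimensional unital associative
   subalgebra, [1] is a sum of three orthogonal idempotents whose lengths add up
   to [(1, 1) = 4], so two of them are orthogonal axes [a_0, a_2] or [a_1, a_3];
   the subalgebra is then [<a_0, a_2, 1 - a_0 - a_2>] or
   [<a_1, a_3, 1 - a_1 - a_3>].  A larger one would meet the fixed subalgebras
   of the reflections [a_0 <-> a_2] and [a_1 <-> a_3] in both of these, hence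
   contain [a_0 + a_2], [a_1 + a_3] and [v], which do not associate.  Maximal
   associative subalgebras contain [1]; those of dimension at most 2 are
   trivial, and [<x, 1 - x>] is maximal for each idempotent [x] on a rational
   curve avoiding the two 3-dimensional ones. *)

Lemma inj_family_not_finite (T : eqType) (P : T -> Prop) (f : nat -> T) :
  injective f -> (forall n, P (f n)) -> ~ exists s : seq T, forall x, P x -> x \in s.
Proof.
move=> f_inj Pf [s hs].
pose L := [seq f n | n <- iota 0 (size s).+1].
have uL : uniq L by rewrite map_inj_uniq ?iota_uniq.
have sLs : {subset L <= s} by move=> _ /mapP [n _ ->]; apply: hs.
by have := uniq_leq_size uL sLs; rewrite size_map size_iota ltnn.
Qed.

Section SmallSpans.
Variables (K : fieldType) (vT : vectType K).

Lemma span2P (a b z : vT) :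
  reflect (exists k1 k2, z = k1 *: a + k2 *: b) (z \in <<[:: a; b]>>%VS).
Proof.
apply: (iffP idP) => [|[k1 [k2 ->]]]; last first.
  by rewrite memvD // memvZ // memv_span // !inE eqxx ?orbT.
rewrite span_cons span_seq1 => /memv_addP [y /vlineP [k1 ->] [w /vlineP [k2 ->] ->]].
by exists k1, k2.
Qed.

Lemma span3P (a b c z : vT) :
  reflect (exists k1 k2 k3, z = k1 *: a + k2 *: b + k3 *: c) (z \in <<[:: a; b; c]>>%VS).
Proof.
apply: (iffP idP) => [|[k1 [k2 [k3 ->]]]]; last first.
  by rewrite !memvD // memvZ // memv_span // !inE eqxx ?orbT.
rewrite span_cons => /memv_addP [y /vlineP [k1 ->] [w /span2P [k2 [k3 ->]] ->]].
by exists k1, k2, k3; rewrite addrA.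
Qed.

Lemma span_free_dim (U : {vspace vT}) (X : seq vT) :
  free X -> {subset X <= U} -> (\dim U <= size X)%N -> <<X>>%VS = U.
Proof. by move=> fX /span_subvP sXU dU; apply: span_basis; rewrite basisEfree fX sXU. Qed.

End SmallSpans.

Section Hyperplanes.
Variables (K : fieldType) (n : nat).

Definition hyperplane (c : 'cV[K]_n) : {vspace 'rV[K]_n} := lker (linfun (mulmxr c)).

Lemma mem_hyperplane (c : 'cV[K]_n) z : (z \in hyperplane c) = (z *m c == 0).
Proof. by rewrite memv_ker lfunE. Qed.

Lemma dim_hyperplane (c : 'cV[K]_n) : (n.-1 <= \dim (hyperplane c))%N.
Proof.
pose f : 'Hom('rV[K]_n, 'rV[K]_1) := linfun (mulmxr c).
have h := limg_ker_dim f fullv; rewrite capfv dimvf /dim /= mul1n in h.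
have himg : (\dim (f @: fullv) <= 1)%N.
  by rewrite (leq_trans (dimvS (subvf _))) // dimvf /dim /= mul1n.
by rewrite /hyperplane -/f -subn1 leq_subLR -{1}h addnC leq_add2r.
Qed.

End Hyperplanes.

Section IdempotentEquations.
Variable F : realFieldType.

Lemma mulf_eq0_or (x y : F) : x * y = 0 -> x = 0 \/ y = 0.
Proof. by move/eqP; rewrite mulf_eq0 => /orP[] /eqP; [left | right]. Qed.

(* The equation [x x = x] of [V4A], written in the coordinates
   [a = (x0 + x2)/2], [b = (x1 + x3)/2], [g = x4], [s = (x0 - x2)/2],
   [t = (x1 - x3)/2]; the reflections swapping [a0, a2] and [a1, a3] act as
   [s |-> -s] and [t |-> -t]. *)
Definition idem_system (a b g s t : F) : Prop :=
  [/\ a ^+ 2 + a * b / 4 + a * g / 2 - b * g / 2 + s ^+ 2 = a,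
      b ^+ 2 + a * b / 4 - a * g / 2 + b * g / 2 + t ^+ 2 = b,
      g ^+ 2 - 3 * a * b / 8 + 3 * a * g / 4 + 3 * b * g / 4 = g,
      s * (2 * a + b / 8 + 3 * g / 4 - 1) = 0 &
      t * (a / 8 + 2 * b + 3 * g / 4 - 1) = 0].

Lemma idem_system_sym a b g s t : idem_system a b g s t -> idem_system b a g t s.
Proof. by case=> *; split; lra. Qed.

Lemma idem_system_s0t0 a b g :
  idem_system a b g 0 0 -> a + b + g = 0 \/ 1 <= a + b + g.
Proof.
case=> Ea Eb Eg _ _.
have /mulf_eq0_or [ab|abg] : (a - b) * (a + b + g - 1) = 0 by lra.
  2: by right; lra.
have {ab} eb : b = a by lra.
subst b.
have /mulf_eq0_or [a0|a45] : a * (5 * a / 4 - 1) = 0 by lra.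
  by subst a; have /mulf_eq0_or [] : g * (g - 1) = 0; [lra | left; lra | right; lra].
have {}a45 : a = 4 / 5 by lra.
by subst a; right; have /mulf_eq0_or [] : (g - 2 / 5) * (g + 3 / 5) = 0; lra.
Qed.

Lemma idem_system_t0 a b g s : s != 0 -> idem_system a b g s 0 ->
  1 <= a + b + g \/ [/\ b = 0, g = 0, a = 1 / 2 & s ^+ 2 = 1 / 4].
Proof.
move=> s0 [Ea Eb Eg /mulf_eq0_or Es _]; rewrite expr0n /= addr0 in Eb.
have {Es} ea : a = 1 / 2 - b / 16 - 3 * g / 8.
  by case: Es => [h|]; [rewrite h eqxx in s0 | lra].
subst a.
pose l := b + g + (1 / 2 - b / 16 - 3 * g / 8).
(* The cubic is a linear combination of [b Eb], [g Eb], [b Eg] and [g Eg]. *)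
have : (l - 1 / 2) * (l - 1) * (l - 3 / 2) = 0.
  have := congr1 (fun z => b * z) Eb; have := congr1 (fun z => g * z) Eb.
  have := congr1 (fun z => b * z) Eg; have := congr1 (fun z => g * z) Eg.
  rewrite /l; lra.
move=> /mulf_eq0_or [/mulf_eq0_or [] hl | hl]; try by left; rewrite /l in hl; lra.
right.
have lin : 15 * b / 8 + 5 * g / 4 = 0 by rewrite /l in hl; lra.
have := congr1 (fun z => b * z) lin; have := congr1 (fun z => g * z) lin.
rewrite !mulr0 => hb hg.
have b0 : b = 0 by lra.
have g0 : g = 0 by lra.
by split => //; subst b g; lra.
Qed.

Lemma idem_system_st a b g s t : s != 0 -> t != 0 -> idem_system a b g s t ->
  6 / 7 <= a + b + g.
Proof.
move=> s0 t0 [_ _ Eg /mulf_eq0_or Es /mulf_eq0_or Et].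
have {Es} ha : 2 * a + b / 8 + 3 * g / 4 - 1 = 0.
  by case: Es => // h; rewrite h eqxx in s0.
have {Et} hb : a / 8 + 2 * b + 3 * g / 4 - 1 = 0.
  by case: Et => // h; rewrite h eqxx in t0.
have eb : b = a by lra.
have eg : g = 4 / 3 - 17 * a / 6 by lra.
subst b g.
by have /mulf_eq0_or [] : (a - 4 / 7) * (a - 8 / 35) = 0; lra.
Qed.

Lemma idem_system_cases a b g s t : idem_system a b g s t ->
  [\/ a + b + g = 0, 6 / 7 <= a + b + g,
      [/\ b = 0, g = 0, t = 0, a = 1 / 2 & s ^+ 2 = 1 / 4] |
      [/\ a = 0, g = 0, s = 0, b = 1 / 2 & t ^+ 2 = 1 / 4]].
Proof.
move=> E; have [s0 | s0] := eqVneq s 0; have [t0 | t0] := eqVneq t 0.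
- subst s t; case: (idem_system_s0t0 E) => h; [exact: Or41 | apply: Or42; lra].
- subst s; case: (idem_system_t0 t0 (idem_system_sym E)) => [h | [-> -> -> ?]].
    by apply: Or42; lra.
  by apply: Or44.
- subst t; case: (idem_system_t0 s0 E) => [h | [-> -> -> ?]]; last exact: Or43.
  by apply: Or42; lra.
- exact/Or42/(idem_system_st s0 t0 E).
Qed.

Lemma two_of_three_eq1 (x y z : F) : x + y + z = 4 ->
  x = 1 \/ 12 / 7 <= x -> y = 1 \/ 12 / 7 <= y -> z = 1 \/ 12 / 7 <= z ->
  [\/ x = 1 /\ y = 1, x = 1 /\ z = 1 | y = 1 /\ z = 1].
Proof.
move=> s [] hx [] hy [] hz; try by [apply: Or31 | apply: Or32 | apply: Or33].
all: by exfalso; lra.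
Qed.

End IdempotentEquations.

Section V4ASubalgebras.
Variable R : realType.
Local Notation V := (V4A R).
Local Notation mul := (@v4a_mul R).
Local Notation idem := (@Defs.idempotent R).

Definition i0 : 'I_5 := @Ordinal 5 0 isT.
Definition i1 : 'I_5 := @Ordinal 5 1 isT.
Definition i2 : 'I_5 := @Ordinal 5 2 isT.
Definition i3 : 'I_5 := @Ordinal 5 3 isT.
Definition i4 : 'I_5 := @Ordinal 5 4 isT.

Definition vec (c0 c1 c2 c3 c4 : R) : V := \row_(i < 5) [:: c0; c1; c2; c3; c4]`_i.

Lemma ord5P (k : 'I_5) : k = i0 \/ k = i1 \/ k = i2 \/ k = i3 \/ k = i4.
Proof.
case: k => [[|[|[|[|[|k]]]]] Hk] //.
- by left; apply: val_inj.
- by right; left; apply: val_inj.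
- by do 2 right; left; apply: val_inj.
- by do 3 right; left; apply: val_inj.
- by do 4 right; apply: val_inj.
Qed.

Lemma row5P (x y : V) : x 0 i0 = y 0 i0 -> x 0 i1 = y 0 i1 -> x 0 i2 = y 0 i2 ->
  x 0 i3 = y 0 i3 -> x 0 i4 = y 0 i4 -> x = y.
Proof. by move=> *; apply/rowP => k; case: (ord5P k) => [|[|[|[|]]]] ->. Qed.

Lemma sum5 (f : 'I_5 -> R) : \sum_(i < 5) f i = f i0 + f i1 + f i2 + f i3 + f i4.
Proof.
rewrite !big_ord_recr big_ord0 /= add0r.
by congr (_ + _ + _ + _ + _); congr f; apply: val_inj.
Qed.

Definition mul_poly0 (x0 x1 x2 x3 x4 y0 y1 y2 y3 y4 : R) :=
  x0 * y0 + 3 / 64 * (x0 * y1 + x1 * y0) + 3 / 64 * (x0 * y3 + x3 * y0)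
  + 5 / 16 * (x0 * y4 + x4 * y0) + 1 / 64 * (x1 * y2 + x2 * y1)
  - 1 / 8 * (x1 * y4 + x4 * y1) + 1 / 64 * (x2 * y3 + x3 * y2)
  - 1 / 16 * (x2 * y4 + x4 * y2) - 1 / 8 * (x3 * y4 + x4 * y3).

Definition mul_poly1 (x0 x1 x2 x3 x4 y0 y1 y2 y3 y4 : R) :=
  3 / 64 * (x0 * y1 + x1 * y0) + 1 / 64 * (x0 * y3 + x3 * y0)
  - 1 / 8 * (x0 * y4 + x4 * y0) + x1 * y1 + 3 / 64 * (x1 * y2 + x2 * y1)
  + 5 / 16 * (x1 * y4 + x4 * y1) + 1 / 64 * (x2 * y3 + x3 * y2)
  - 1 / 8 * (x2 * y4 + x4 * y2) - 1 / 16 * (x3 * y4 + x4 * y3).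

Definition mul_poly2 (x0 x1 x2 x3 x4 y0 y1 y2 y3 y4 : R) :=
  1 / 64 * (x0 * y1 + x1 * y0) + 1 / 64 * (x0 * y3 + x3 * y0)
  - 1 / 16 * (x0 * y4 + x4 * y0) + 3 / 64 * (x1 * y2 + x2 * y1)
  - 1 / 8 * (x1 * y4 + x4 * y1) + x2 * y2 + 3 / 64 * (x2 * y3 + x3 * y2)
  + 5 / 16 * (x2 * y4 + x4 * y2) - 1 / 8 * (x3 * y4 + x4 * y3).

Definition mul_poly3 (x0 x1 x2 x3 x4 y0 y1 y2 y3 y4 : R) :=
  1 / 64 * (x0 * y1 + x1 * y0) + 3 / 64 * (x0 * y3 + x3 * y0)
  - 1 / 8 * (x0 * y4 + x4 * y0) + 1 / 64 * (x1 * y2 + x2 * y1)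
  - 1 / 16 * (x1 * y4 + x4 * y1) + 3 / 64 * (x2 * y3 + x3 * y2)
  - 1 / 8 * (x2 * y4 + x4 * y2) + x3 * y3 + 5 / 16 * (x3 * y4 + x4 * y3).

Definition mul_poly4 (x0 x1 x2 x3 x4 y0 y1 y2 y3 y4 : R) :=
  - 3 / 64 * (x0 * y1 + x1 * y0) - 3 / 64 * (x0 * y3 + x3 * y0)
  + 3 / 16 * (x0 * y4 + x4 * y0) - 3 / 64 * (x1 * y2 + x2 * y1)
  + 3 / 16 * (x1 * y4 + x4 * y1) - 3 / 64 * (x2 * y3 + x3 * y2)
  + 3 / 16 * (x2 * y4 + x4 * y2) + 3 / 16 * (x3 * y4 + x4 * y3) + x4 * y4.

Lemma mul_coord0 (x y : V) :
  mul x y 0 i0 = mul_poly0 (x 0 i0) (x 0 i1) (x 0 i2) (x 0 i3) (x 0 i4)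
                         (y 0 i0) (y 0 i1) (y 0 i2) (y 0 i3) (y 0 i4).
Proof. by rewrite /v4a_mul mxE !sum5 /v4a_coef /av_coef /= /mul_poly0; field. Qed.

Lemma mul_coord1 (x y : V) :
  mul x y 0 i1 = mul_poly1 (x 0 i0) (x 0 i1) (x 0 i2) (x 0 i3) (x 0 i4)
                         (y 0 i0) (y 0 i1) (y 0 i2) (y 0 i3) (y 0 i4).
Proof. by rewrite /v4a_mul mxE !sum5 /v4a_coef /av_coef /= /mul_poly1; field. Qed.

Lemma mul_coord2 (x y : V) :
  mul x y 0 i2 = mul_poly2 (x 0 i0) (x 0 i1) (x 0 i2) (x 0 i3) (x 0 i4)
                         (y 0 i0) (y 0 i1) (y 0 i2) (y 0 i3) (y 0 i4).
Proof. by rewrite /v4a_mul mxE !sum5 /v4a_coef /av_coef /= /mul_poly2; field. Qed.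

Lemma mul_coord3 (x y : V) :
  mul x y 0 i3 = mul_poly3 (x 0 i0) (x 0 i1) (x 0 i2) (x 0 i3) (x 0 i4)
                         (y 0 i0) (y 0 i1) (y 0 i2) (y 0 i3) (y 0 i4).
Proof. by rewrite /v4a_mul mxE !sum5 /v4a_coef /av_coef /= /mul_poly3; field. Qed.

Lemma mul_coord4 (x y : V) :
  mul x y 0 i4 = mul_poly4 (x 0 i0) (x 0 i1) (x 0 i2) (x 0 i3) (x 0 i4)
                         (y 0 i0) (y 0 i1) (y 0 i2) (y 0 i3) (y 0 i4).
Proof. by rewrite /v4a_mul mxE !sum5 /v4a_coef /av_coef /= /mul_poly4; field. Qed.

Ltac by_coords := apply: row5P;
  rewrite ?(mul_coord0, mul_coord1, mul_coord2, mul_coord3, mul_coord4, mxE)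
    /mul_poly0 /mul_poly1 /mul_poly2 /mul_poly3 /mul_poly4 /=; by field.

Lemma vmulC (x y : V) : mul x y = mul y x. Proof. by by_coords. Qed.
Lemma vmulDl (x y z : V) : mul (x + y) z = mul x z + mul y z. Proof. by by_coords. Qed.
Lemma vmulDr (x y z : V) : mul z (x + y) = mul z x + mul z y. Proof. by by_coords. Qed.
Lemma vmulZl a (x y : V) : mul (a *: x) y = a *: mul x y. Proof. by by_coords. Qed.
Lemma vmulZr a (x y : V) : mul y (a *: x) = a *: mul y x. Proof. by by_coords. Qed.
Lemma vmulBl (x y z : V) : mul (x - y) z = mul x z - mul y z. Proof. by by_coords. Qed.
Lemma vmulBr (x y z : V) : mul z (x - y) = mul z x - mul z y. Proof. by by_coords. Qed.

Definition one : V := vec (4/5) (4/5) (4/5) (4/5) (2/5).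

Lemma one_mul (x : V) : mul one x = x. Proof. by by_coords. Qed.
Lemma mul_one (x : V) : mul x one = x. Proof. by rewrite vmulC one_mul. Qed.

Lemma one_neq0 : one != 0.
Proof. by apply/eqP => /(congr1 (fun z : V => z 0 i0)); rewrite !mxE /=; lra. Qed.

Lemma idem_one : idem one. Proof. exact: one_mul. Qed.

Definition ax0 : V := vec 1 0 0 0 0.
Definition ax1 : V := vec 0 1 0 0 0.
Definition ax2 : V := vec 0 0 1 0 0.
Definition ax3 : V := vec 0 0 0 1 0.
Definition vv : V := vec 0 0 0 0 1.

(* [dot1 x] is the inner product [(x, 1)]; by associativity of the form
   [dot1 (x x) = (x, x)], which [norm2] writes as a sum of squares. *)
Definition dot1 (x : V) := x 0 i0 + x 0 i1 + x 0 i2 + x 0 i3 + 2 * x 0 i4.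

Definition norm2 (x : V) :=
  let u := x 0 i0 + x 0 i2 in let w := x 0 i1 + x 0 i3 in
  let d := x 0 i0 - x 0 i2 in let g := x 0 i1 - x 0 i3 in
  2 * (x 0 i4 + 3 / 16 * (u + w)) ^+ 2 +
  (10 * (u - w) ^+ 2 + 100 * u ^+ 2 + 100 * w ^+ 2 + 128 * d ^+ 2 + 128 * g ^+ 2) / 256.

Lemma dot1_mulxx (x : V) : dot1 (mul x x) = norm2 x.
Proof.
rewrite /dot1 /norm2 !(mul_coord0, mul_coord1, mul_coord2, mul_coord3, mul_coord4).
by rewrite /mul_poly0 /mul_poly1 /mul_poly2 /mul_poly3 /mul_poly4 /=; field.
Qed.

Lemma norm2_ge0 (x : V) : 0 <= norm2 x.
Proof.
rewrite /norm2 /=; apply: addr_ge0; first by rewrite mulr_ge0 ?sqr_ge0.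
by rewrite divr_ge0 // !addr_ge0 // mulr_ge0 // sqr_ge0.
Qed.

Lemma norm2_eq0 (x : V) : norm2 x = 0 -> x = 0.
Proof.
rewrite /norm2 /=.
set u := _ + x 0 i2; set w := _ + x 0 i3; set d := _ - x 0 i2; set g := _ - x 0 i3.
set z := x 0 i4 + _ => H.
have sq0 (c : R) : 0 <= c ^+ 2 -> c ^+ 2 <= 0 -> c = 0.
  by move=> *; apply/eqP; rewrite -sqrf_eq0 eq_le; apply/andP.
have := sqr_ge0 z; have := sqr_ge0 u; have := sqr_ge0 w.
have := sqr_ge0 d; have := sqr_ge0 g; have := sqr_ge0 (u - w) => ? hg hd hw hu hz.
have u0 : u = 0 by apply: sq0 => //; lra.
have w0 : w = 0 by apply: sq0 => //; lra.
have d0 : d = 0 by apply: sq0 => //; lra.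
have g0 : g = 0 by apply: sq0 => //; lra.
have z0 : z = 0 by apply: sq0 => //; lra.
move: u0 w0 d0 g0 z0; rewrite /z /u /w /d /g => *.
apply: row5P; rewrite !mxE /=; lra.
Qed.

Lemma norm2_gt0 (x : V) : x != 0 -> 0 < norm2 x.
Proof.
by move=> nx; rewrite lt_def norm2_ge0 andbT; apply: contra nx => /eqP/norm2_eq0 ->.
Qed.

Lemma dot1D (x y : V) : dot1 (x + y) = dot1 x + dot1 y.
Proof. by rewrite /dot1 !mxE; ring. Qed.

Lemma dot1Z a (x : V) : dot1 (a *: x) = a * dot1 x.
Proof. by rewrite /dot1 !mxE; ring. Qed.

Lemma dot1_one : dot1 one = 4.
Proof. by rewrite /dot1 !mxE /=; field. Qed.

Lemma dot1_idem (x : V) : idem x -> dot1 x = norm2 x.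
Proof. by move=> hx; rewrite -dot1_mulxx hx. Qed.

Lemma dot1_idem_gt0 (x : V) : idem x -> x != 0 -> 0 < dot1 x.
Proof. by move=> hx nx; rewrite dot1_idem // norm2_gt0. Qed.

Definition axes : seq V := [:: ax0; ax1; ax2; ax3].

Lemma idem_system_of (x : V) : idem x ->
  idem_system ((x 0 i0 + x 0 i2) / 2) ((x 0 i1 + x 0 i3) / 2) (x 0 i4)
              ((x 0 i0 - x 0 i2) / 2) ((x 0 i1 - x 0 i3) / 2).
Proof.
move=> hx; have c k := congr1 (fun z : V => z 0 k) hx.
move: (c i0) (c i1) (c i2) (c i3) (c i4) => /=.
rewrite mul_coord0 mul_coord1 mul_coord2 mul_coord3 mul_coord4.
rewrite /mul_poly0 /mul_poly1 /mul_poly2 /mul_poly3 /mul_poly4 => *.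
by split; lra.
Qed.

Lemma dot1_axes (e : V) : e \in axes -> dot1 e = 1.
Proof. by rewrite !inE => /or4P [] /eqP ->; rewrite /dot1 !mxE /=; lra. Qed.

Lemma idem_axes_or_long (x : V) : idem x -> x != 0 -> x \in axes \/ 12 / 7 <= dot1 x.
Proof.
move=> hx nx; have pos := dot1_idem_gt0 hx nx.
have dot1E : dot1 x = 2 * ((x 0 i0 + x 0 i2) / 2 + (x 0 i1 + x 0 i3) / 2 + x 0 i4).
  by rewrite /dot1; lra.
have sq (c : R) : c ^+ 2 = 1 / 4 -> c = 1 / 2 \/ c = - (1 / 2).
  by move=> h; have /mulf_eq0_or [] : (c - 1 / 2) * (c + 1 / 2) = 0; [lra | left | right]; lra.
case: (idem_system_cases (idem_system_of hx))
  => [h | h | [hb hg ht ha /sq hs] | [ha hg hs hb /sq ht]].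
- by move: pos; rewrite dot1E h; lra.
- by right; rewrite dot1E; lra.
- left; rewrite !inE; apply/or4P.
  case: hs => hs; [apply: Or41 | apply: Or43]; apply/eqP; apply: row5P; rewrite !mxE /=; lra.
- left; rewrite !inE; apply/or4P.
  case: ht => ht; [apply: Or42 | apply: Or44]; apply/eqP; apply: row5P; rewrite !mxE /=; lra.
Qed.

Lemma orth_axes_opposite (e f : V) (s : seq V) : e \in axes -> f \in axes ->
  mul e f = 0 -> e \in s -> f \in s ->
  (ax0 \in s /\ ax2 \in s) \/ (ax1 \in s /\ ax3 \in s).
Proof.
rewrite !inE => /or4P he /or4P hf /(congr1 dot1) hef es fs.
case: he => /eqP E; case: hf => /eqP F; subst e f; move: hef;
  rewrite /dot1 !(mul_coord0, mul_coord1, mul_coord2, mul_coord3, mul_coord4)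
    /mul_poly0 /mul_poly1 /mul_poly2 /mul_poly3 /mul_poly4 !mxE /= => h;
  by [exfalso; lra | left | right].
Qed.

Lemma idem_dot1_cases (x : V) : idem x -> x != 0 -> dot1 x = 1 \/ 12 / 7 <= dot1 x.
Proof.
by move=> hx nx; case: (idem_axes_or_long hx nx) => [/dot1_axes|]; [left | right].
Qed.

Lemma idem_dot1_eq1 (x : V) : idem x -> x != 0 -> dot1 x = 1 -> x \in axes.
Proof.
by move=> hx nx h1; case: (idem_axes_or_long hx nx) => // l; exfalso; lra.
Qed.

Lemma orth_idem_triple (e1 e2 e3 : V) :
  idem e1 -> idem e2 -> idem e3 -> e1 != 0 -> e2 != 0 -> e3 != 0 ->
  mul e1 e2 = 0 -> mul e1 e3 = 0 -> mul e2 e3 = 0 -> e1 + e2 + e3 = one ->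
  (ax0 \in [:: e1; e2; e3] /\ ax2 \in [:: e1; e2; e3]) \/
  (ax1 \in [:: e1; e2; e3] /\ ax3 \in [:: e1; e2; e3]).
Proof.
move=> h1 h2 h3 n1 n2 n3 m12 m13 m23 hs.
have sum4 : dot1 e1 + dot1 e2 + dot1 e3 = 4 by rewrite -dot1_one -hs !dot1D.
have mem1 : e1 \in [:: e1; e2; e3] by rewrite !inE eqxx.
have mem2 : e2 \in [:: e1; e2; e3] by rewrite !inE eqxx orbT.
have mem3 : e3 \in [:: e1; e2; e3] by rewrite !inE eqxx !orbT.
have axis1 := idem_dot1_eq1 h1 n1; have axis2 := idem_dot1_eq1 h2 n2.
have axis3 := idem_dot1_eq1 h3 n3.
case: (two_of_three_eq1 sum4 (idem_dot1_cases h1 n1) (idem_dot1_cases h2 n2)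
                              (idem_dot1_cases h3 n3)) => [[d1 d2]|[d1 d3]|[d2 d3]].
- exact: orth_axes_opposite (axis1 d1) (axis2 d2) m12 mem1 mem2.
- exact: orth_axes_opposite (axis1 d1) (axis3 d3) m13 mem1 mem3.
- exact: orth_axes_opposite (axis2 d2) (axis3 d3) m23 mem2 mem3.
Qed.

Lemma mul_orth2 (e f : V) k1 k2 l1 l2 : idem e -> idem f -> mul e f = 0 ->
  mul (k1 *: e + k2 *: f) (l1 *: e + l2 *: f) = (k1 * l1) *: e + (k2 * l2) *: f.
Proof.
move=> he hf hef.
rewrite vmulDl !vmulDr !vmulZl !vmulZr (vmulC f e) hef he hf.
by apply: row5P; rewrite !mxE /=; ring.
Qed.

Lemma mul_orth3 (e f g : V) k1 k2 k3 l1 l2 l3 : idem e -> idem f -> idem g ->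
  mul e f = 0 -> mul e g = 0 -> mul f g = 0 ->
  mul (k1 *: e + k2 *: f + k3 *: g) (l1 *: e + l2 *: f + l3 *: g) =
    (k1 * l1) *: e + (k2 * l2) *: f + (k3 * l3) *: g.
Proof.
move=> he hf hg hef heg hfg.
rewrite !vmulDl !vmulDr !vmulZl !vmulZr (vmulC f e) (vmulC g e) (vmulC g f).
rewrite hef heg hfg he hf hg.
by apply: row5P; rewrite !mxE /=; ring.
Qed.

Lemma assoc_orth2 (e f : V) : idem e -> idem f -> mul e f = 0 ->
  is_assoc_subalgebra <<[:: e; f]>>%VS.
Proof.
move=> he hf hef; split.
  move=> _ _ /span2P [k1 [k2 ->]] /span2P [l1 [l2 ->]].
  by rewrite mul_orth2 //; apply/span2P; do 2 eexists.
move=> _ _ _ /span2P [k1 [k2 ->]] /span2P [l1 [l2 ->]] /span2P [m1 [m2 ->]].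
by rewrite !mul_orth2 // !mulrA.
Qed.

Lemma assoc_orth3 (e f g : V) : idem e -> idem f -> idem g ->
  mul e f = 0 -> mul e g = 0 -> mul f g = 0 ->
  is_assoc_subalgebra <<[:: e; f; g]>>%VS.
Proof.
move=> he hf hg hef heg hfg; split.
  move=> _ _ /span3P [k1 [k2 [k3 ->]]] /span3P [l1 [l2 [l3 ->]]].
  by rewrite mul_orth3 //; apply/span3P; do 3 eexists.
move=> _ _ _ /span3P [k1 [k2 [k3 ->]]] /span3P [l1 [l2 [l3 ->]]] /span3P [m1 [m2 [m3 ->]]].
by rewrite !mul_orth3 // !mulrA.
Qed.

Lemma free_orth2 (e f : V) : idem e -> idem f -> e != 0 -> f != 0 -> mul e f = 0 ->
  free [:: e; f].
Proof.
move=> he hf ne nf hef; rewrite free_cons seq1_free nf andbT span_seq1.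
by apply/vlineP => -[k hk]; move: ne; rewrite -he {2}hk vmulZr hef scaler0 eqxx.
Qed.

Lemma free_orth3 (e1 e2 e3 : V) : idem e1 -> idem e2 -> idem e3 ->
  e1 != 0 -> e2 != 0 -> e3 != 0 ->
  mul e1 e2 = 0 -> mul e1 e3 = 0 -> mul e2 e3 = 0 -> free [:: e1; e2; e3].
Proof.
move=> h1 h2 h3 n1 n2 n3 m12 m13 m23; rewrite free_cons free_orth2 // andbT.
apply/span2P => -[k2 [k3 hk]].
by move: n1; rewrite -h1 {2}hk vmulDr !vmulZr m12 m13 !scaler0 addr0 eqxx.
Qed.

Lemma peirce_triple (X F : V) : idem X -> idem F -> mul X F = F ->
  [/\ idem (X - F), idem (one - X), mul F (X - F) = 0, mul F (one - X) = 0 &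
      mul (X - F) (one - X) = 0].
Proof.
move=> hX hF hXF; have hFX : mul F X = F by rewrite vmulC.
rewrite /Defs.idempotent !(vmulBl, vmulBr) !(one_mul, mul_one) hX hF hXF hFX.
by split; apply: row5P; rewrite !mxE /=; ring.
Qed.

Lemma idem_notin_line1 (x : V) : idem x -> x != 0 -> x != one -> x \notin <[one]>%VS.
Proof.
move=> hx n0 n1; apply/vlineP => -[k hk].
have hk2 : (k ^+ 2 - k) *: one = 0.
  by rewrite scalerBl -hk -{1}hx hk vmulZl vmulZr one_mul scalerA -expr2 subrr.
move/eqP: hk2; rewrite scaler_eq0 (negbTE one_neq0) orbF => /eqP hk2.
have /mulf_eq0_or [k0|k1] : k * (k - 1) = 0 by rewrite mulrBr mulr1 -expr2.
  by move: n0; rewrite hk k0 scale0r eqxx.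
by move: n1; rewrite hk (_ : k = 1) ?scale1r ?eqxx //; lra.
Qed.

(* Completing the square: [n := u - (a/2) e] satisfies [n n = D e]; positivity
   of the form forces [D > 0], and [(e + n / sqrt D) / 2] is idempotent. *)
Lemma idem_of_quadratic (e u : V) a b : idem e -> e != 0 -> mul e u = u ->
  u \notin <[e]>%VS -> mul u u = a *: u + b *: e ->
  exists2 x, x \in <<[:: e; u]>>%VS & [/\ idem x, x \notin <[e]>%VS & mul e x = x].
Proof.
move=> he ne heu hu huu.
pose n := u - (a / 2) *: e; pose D := b + a ^+ 2 / 4.
have hen : mul e n = n by rewrite /n vmulBr vmulZr heu he.
have hnn : mul n n = D *: e.
  rewrite /n vmulBl !vmulBr !vmulZl !vmulZr (vmulC u e) heu huu he.
  by apply: row5P; rewrite /D !mxE /=; field.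
have normn : D * dot1 e = norm2 n by rewrite -dot1_mulxx hnn dot1Z.
have hn : n \notin <[e]>%VS.
  by apply: contra hu => hn; rewrite -(subrK ((a / 2) *: e) u) memvD ?memvZ ?memv_line.
have D_gt0 : 0 < D.
  have D_ge0 : 0 <= D by rewrite -(pmulr_lge0 _ (dot1_idem_gt0 he ne)) normn norm2_ge0.
  rewrite lt_def D_ge0 andbT; apply: contra hn => /eqP D0.
  by rewrite (@norm2_eq0 n) ?mem0v // -normn D0 mul0r.
set r := Num.sqrt D; have r_gt0 : 0 < r by rewrite sqrtr_gt0.
have r2 : r ^+ 2 = D by rewrite sqr_sqrtr // ltW.
have r0 : r != 0 by rewrite gt_eqF.
exists ((1 / 2) *: e + (1 / (2 * r)) *: n).
  apply/span2P; exists (1 / 2 - a / (4 * r)), (1 / (2 * r)).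
  by apply: row5P; rewrite /n !mxE /=; field.
split.
- rewrite /Defs.idempotent vmulDl !vmulDr !vmulZl !vmulZr (vmulC n e) hen he hnn -r2.
  by apply: row5P; rewrite !mxE /=; field.
- apply: contra hn => /vlineP [k hk]; apply/vlineP; exists ((2 * k - 1) * r).
  have -> : n = (2 * r) *: ((1 / 2) *: e + (1 / (2 * r)) *: n) - r *: e.
    by apply: row5P; rewrite !mxE /=; field.
  by rewrite hk; apply: row5P; rewrite !mxE /=; ring.
- by rewrite vmulDr !vmulZr he hen.
Qed.

Lemma plane_idem (W : {vspace V}) : \dim W = 2%N -> one \in W ->
  (forall u, u \in W -> mul u u \in W) ->
  exists2 x, x \in W & [/\ idem x, x != 0 & x != one].
Proof.
move=> dW oW hW.
have /subvPn [u uW uo] : ~~ (W <= <[one]>)%VS.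
  by apply: contraTN isT => /dimvS; rewrite dW dim_vline one_neq0.
have spW : <<[:: u; one]>>%VS = W.
  apply: span_free_dim; last by rewrite dW.
    by rewrite free_cons seq1_free one_neq0 span_seq1 uo.
  by move=> z; rewrite !inE => /orP [] /eqP ->.
have /span2P [a [b huu]] : mul u u \in <<[:: u; one]>>%VS by rewrite spW hW.
have [x xs [hx xl hox]] := idem_of_quadratic idem_one one_neq0 (one_mul u) uo huu.
exists x.
  by apply: subvP xs; apply/span_subvP => z; rewrite !inE => /orP [] /eqP ->.
split => //; apply: contra xl => /eqP ->; rewrite ?mem0v ?memv_line //.
Qed.

Lemma dimv_le5 (U : {vspace V}) : (\dim U <= 5)%N.
Proof. by apply: leq_trans (dimvS (subvf U)) _; rewrite dimvf /dim /= mul1n. Qed.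

Lemma assoc_addv_line1 (U : {vspace V}) : is_assoc_subalgebra U ->
  is_assoc_subalgebra (U + <[one]>)%VS.
Proof.
move=> [hU1 hU2].
have mulDl1 u k y : mul (u + k *: one) y = mul u y + k *: y.
  by rewrite vmulDl vmulZl one_mul.
have mulDr1 u k y : mul y (u + k *: one) = mul y u + k *: y.
  by rewrite vmulDr vmulZr mul_one.
split.
  move=> _ _ /memv_addP [u hu [_ /vlineP [k ->] ->]]
    /memv_addP [u' hu' [_ /vlineP [k' ->] ->]].
  rewrite mulDl1 mulDr1 scalerDr scalerA !addrA.
  by apply: memv_add; rewrite ?memvZ ?memv_line // !memvD ?memvZ ?hU1.
move=> _ _ _ /memv_addP [u hu [_ /vlineP [k ->] ->]]
  /memv_addP [u' hu' [_ /vlineP [k' ->] ->]] /memv_addP [u'' hu'' [_ /vlineP [k'' ->] ->]].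
rewrite !(mulDl1, mulDr1, vmulDl, vmulDr, vmulZl, vmulZr, one_mul, mul_one) hU2 //.
by apply: row5P; rewrite !mxE /=; ring.
Qed.

Lemma max_assoc_one (U : {vspace V}) : is_max_assoc_subalgebra U -> one \in U.
Proof.
move=> [hU hmax]; rewrite -(hmax _ (assoc_addv_line1 hU) (addvSl _ _)).
by rewrite memvE addvSr.
Qed.

Lemma unital_assoc_dim_le2 (U : {vspace V}) : is_assoc_subalgebra U -> one \in U ->
  (\dim U <= 2)%N -> is_trivial_subalgebra U.
Proof.
move=> [hU1 _] oU dU; exists one; split; first exact: one_mul.
have lU : (<[one]> <= U)%VS by rewrite -memvE.
have := dimvS lU; rewrite dim_vline one_neq0 leq_eqVlt => /orP [/eqP d1 | d2].
  by apply: Or32; apply/eqP; rewrite eq_sym eqEdim lU -d1 dim_vline one_neq0.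
have dim2 : \dim U = 2%N by apply/eqP; rewrite eqn_leq dU d2.
have [x xU [hx nx0 nx1]] := plane_idem dim2 oU (fun u uU => hU1 _ _ uU uU).
have [hy _ _ _ _] := peirce_triple idem_one hx (one_mul x).
have hxy : mul x (one - x) = 0 by rewrite vmulBr mul_one hx subrr.
apply: Or33; exists x; split => //; apply/esym/span_free_dim; last by rewrite dim2.
  by apply: free_orth2; rewrite // subr_eq0 eq_sym.
by move=> z; rewrite !inE => /orP [] /eqP ->; rewrite ?memvB.
Qed.

Definition col5 (c0 c1 c2 c3 c4 : R) : 'cV[R]_5 := \col_(i < 5) [:: c0; c1; c2; c3; c4]`_i.

Lemma hyperplane5P (z : V) c0 c1 c2 c3 c4 :
  reflect (c0 * z 0 i0 + c1 * z 0 i1 + c2 * z 0 i2 + c3 * z 0 i3 + c4 * z 0 i4 = 0)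
          (z \in hyperplane (col5 c0 c1 c2 c3 c4)).
Proof.
rewrite mem_hyperplane; apply: (iffP eqP) => [/(congr1 (fun A : 'M[R]_1 => A 0 0)) | h].
  by rewrite !mxE sum5 !mxE /= => h; lra.
by apply/rowP => j; rewrite !mxE sum5 !mxE /=; lra.
Qed.

Lemma dimv_notin_le4 (U : {vspace V}) z : z \notin U -> (\dim U <= 4)%N.
Proof.
apply: contraR; rewrite -ltnNge => dU; have /eqP -> : U == fullv.
  by rewrite eqEdim subvf dimvf /dim /= mul1n.
by rewrite memvf.
Qed.

(* The fixed subalgebras of the reflections of the indices swapping [a0, a2],
   resp. [a1, a3]. *)
Definition W02 : {vspace V} := hyperplane (col5 1 0 (-1) 0 0).
Definition W13 : {vspace V} := hyperplane (col5 0 1 0 (-1) 0).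

Lemma W02P (z : V) : reflect (z 0 i0 = z 0 i2) (z \in W02).
Proof. by apply: (iffP (hyperplane5P _ _ _ _ _ _)) => h; lra. Qed.

Lemma W13P (z : V) : reflect (z 0 i1 = z 0 i3) (z \in W13).
Proof. by apply: (iffP (hyperplane5P _ _ _ _ _ _)) => h; lra. Qed.

Lemma W02_subalg : is_subalgebra W02.
Proof.
move=> x y /W02P hx /W02P hy; apply/W02P.
by rewrite mul_coord0 mul_coord2 /mul_poly0 /mul_poly2 hx hy; ring.
Qed.

Lemma W13_subalg : is_subalgebra W13.
Proof.
move=> x y /W13P hx /W13P hy; apply/W13P.
by rewrite mul_coord1 mul_coord3 /mul_poly1 /mul_poly3 hx hy; ring.
Qed.

Lemma one_W02 : one \in W02. Proof. by apply/W02P; rewrite !mxE. Qed.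
Lemma one_W13 : one \in W13. Proof. by apply/W13P; rewrite !mxE. Qed.

Lemma ax0_notin_W02 : ax0 \notin W02.
Proof. by apply/W02P; rewrite !mxE /=; lra. Qed.

Lemma ax1_notin_W13 : ax1 \notin W13.
Proof. by apply/W13P; rewrite !mxE /=; lra. Qed.

Lemma dim_W02 : \dim W02 = 4%N.
Proof.
apply/eqP; rewrite eqn_leq (dimv_notin_le4 ax0_notin_W02).
exact: (dim_hyperplane (col5 1 0 (-1) 0 0)).
Qed.

Lemma dim_W13 : \dim W13 = 4%N.
Proof.
apply/eqP; rewrite eqn_leq (dimv_notin_le4 ax1_notin_W13).
exact: (dim_hyperplane (col5 0 1 0 (-1) 0)).
Qed.

Definition p02 : V := ax0 + ax2.
Definition p13 : V := ax1 + ax3.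

Lemma W02_W13_sub : (W02 :&: W13 <= <<[:: p02; p13; vv]>>)%VS.
Proof.
apply/subvP => z /memv_capP [/W02P h02 /W13P h13]; apply/span3P.
exists (z 0 i0), (z 0 i1), (z 0 i4).
by apply: row5P; rewrite !mxE /=; lra.
Qed.

Lemma p02_p13_vv_notin_assoc (U : {vspace V}) : is_assoc_subalgebra U ->
  p02 \in U -> p13 \in U -> vv \in U -> False.
Proof.
move=> [_ hU] hp hq hv; have := hU _ _ _ hp hq hv.
move=> /(congr1 (fun z : V => z 0 i4)).
rewrite !(mul_coord0, mul_coord1, mul_coord2, mul_coord3, mul_coord4, mxE).
by rewrite /mul_poly0 /mul_poly1 /mul_poly2 /mul_poly3 /mul_poly4 /=; lra.
Qed.

Lemma p02_p13_vv_W02 : [/\ p02 \in W02, p13 \in W02 & vv \in W02].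
Proof. by split; apply/W02P; rewrite !mxE /=; lra. Qed.

Lemma p02_p13_vv_W13 : [/\ p02 \in W13, p13 \in W13 & vv \in W13].
Proof. by split; apply/W13P; rewrite !mxE /=; lra. Qed.

Definition compl_span (e f : V) : {vspace V} := <<[:: e; f; one - e - f]>>%VS.

Lemma orth_pair_compl (e f : V) : idem e -> idem f -> mul e f = 0 ->
  [/\ idem (one - e - f), mul e (one - e - f) = 0 & mul f (one - e - f) = 0].
Proof.
move=> he hf hef; have hfe : mul f e = 0 by rewrite vmulC.
rewrite /Defs.idempotent !(vmulBl, vmulBr) !(one_mul, mul_one) he hf hef hfe.
by split; apply: row5P; rewrite !mxE /=; ring.
Qed.

Lemma compl_span_assoc (e f : V) : idem e -> idem f -> mul e f = 0 ->
  is_assoc_subalgebra (compl_span e f).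
Proof.
by move=> he hf hef; have [hg heg hfg] := orth_pair_compl he hf hef; exact: assoc_orth3.
Qed.

Lemma dim_compl_span (e f : V) : idem e -> idem f -> mul e f = 0 ->
  e != 0 -> f != 0 -> one - e - f != 0 -> \dim (compl_span e f) = 3%N.
Proof.
move=> he hf hef ne nf ng; have [hg heg hfg] := orth_pair_compl he hf hef.
exact/eqP/free_orth3.
Qed.

Lemma compl_span_sub (U : {vspace V}) (e f : V) : one \in U -> e \in U -> f \in U ->
  (compl_span e f <= U)%VS.
Proof.
by move=> oU eU fU; apply/span_subvP => z; rewrite !inE => /or3P [] /eqP ->; rewrite ?memvB.
Qed.

Lemma mem_compl_span (e f : V) :
  [/\ e \in compl_span e f, f \in compl_span e f & one \in compl_span e f].
Proof.
have mem z : z \in [:: e; f; one - e - f] -> z \in compl_span e f by exact: memv_span.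
have eS : e \in compl_span e f by rewrite mem // !inE eqxx.
have fS : f \in compl_span e f by rewrite mem // !inE eqxx orbT.
split => //; have -> : one = e + f + (one - e - f) by apply: row5P; rewrite !mxE /=; ring.
by apply: memvD; [exact: memvD | apply: mem; rewrite !inE eqxx !orbT].
Qed.

Definition S02 : {vspace V} := compl_span ax0 ax2.
Definition S13 : {vspace V} := compl_span ax1 ax3.

Lemma idem_axes : [/\ idem ax0, idem ax1, idem ax2 & idem ax3].
Proof. by split; rewrite /Defs.idempotent; by_coords. Qed.

Lemma orth_axes : mul ax0 ax2 = 0 /\ mul ax1 ax3 = 0.
Proof. by split; by_coords. Qed.

Lemma vec_neq0 (x : V) k : x 0 k != 0 -> x != 0.
Proof. by apply: contra => /eqP ->; rewrite mxE. Qed.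

Lemma S02_assoc : is_assoc_subalgebra S02.
Proof. by have [[? _ ? _] [? _]] := (idem_axes, orth_axes); exact: compl_span_assoc. Qed.

Lemma S13_assoc : is_assoc_subalgebra S13.
Proof. by have [[_ ? _ ?] [_ ?]] := (idem_axes, orth_axes); exact: compl_span_assoc. Qed.

Lemma dim_S02 : \dim S02 = 3%N.
Proof.
have [[? _ ? _] [? _]] := (idem_axes, orth_axes).
by apply: dim_compl_span => //; [apply: (@vec_neq0 _ i0) | apply: (@vec_neq0 _ i2)
  | apply: (@vec_neq0 _ i1)]; rewrite !mxE /=; apply/eqP; lra.
Qed.

Lemma dim_S13 : \dim S13 = 3%N.
Proof.
have [[_ ? _ ?] [_ ?]] := (idem_axes, orth_axes).
by apply: dim_compl_span => //; [apply: (@vec_neq0 _ i1) | apply: (@vec_neq0 _ i3)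
  | apply: (@vec_neq0 _ i0)]; rewrite !mxE /=; apply/eqP; lra.
Qed.

Lemma S13_W02 : (S13 <= W02)%VS.
Proof.
by apply/span_subvP => z; rewrite !inE => /or3P [] /eqP ->; apply/W02P; rewrite !mxE /=; lra.
Qed.

Lemma S02_neq_S13 : S02 != S13.
Proof.
apply/eqP => eS; have [ax0S _ _] := mem_compl_span ax0 ax2.
by move: ax0_notin_W02; rewrite (subvP S13_W02) // -eS.
Qed.

Lemma assoc3_idem_outside (U H : {vspace V}) : is_assoc_subalgebra U -> one \in U ->
  \dim U = 3%N -> is_subalgebra H -> \dim H = 4%N -> one \in H -> ~~ (U <= H)%VS ->
  exists2 x, x \in U & [/\ idem x, x != 0 & x != one].
Proof.
move=> [hU _] oU dU hH dH oH nUH.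
have dW : \dim (U :&: H) = 2%N.
  have := dimv_sum_cap U H; have := dimv_le5 (U + H).
  have : \dim (U :&: H) != 3%N.
    apply: contra nUH => /eqP d3; have /eqP <- : (U :&: H)%VS == U.
      by rewrite eqEdim capvSl d3 dU.
    exact: capvSr.
  have := dimvS (capvSl U H); rewrite dU dH; lia.
have oUH : one \in (U :&: H)%VS by rewrite memv_cap oU oH.
have sqUH u : u \in (U :&: H)%VS -> mul u u \in (U :&: H)%VS.
  by move=> /memv_capP [uU uH]; rewrite memv_cap hU // hH.
have [x /memv_capP [xU _] hx] := plane_idem dW oUH sqUH.
by exists x.
Qed.

Lemma assoc3_idem (U : {vspace V}) : is_assoc_subalgebra U -> one \in U ->
  \dim U = 3%N -> exists2 x, x \in U & [/\ idem x, x != 0 & x != one].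
Proof.
move=> hU oU dU.
have [sU02 | nU] := boolP (U <= W02)%VS;
  last exact: (assoc3_idem_outside hU oU dU W02_subalg dim_W02 one_W02 nU).
have [sU13 | nU] := boolP (U <= W13)%VS;
  last exact: (assoc3_idem_outside hU oU dU W13_subalg dim_W13 one_W13 nU).
have sUB : (U <= <<[:: p02; p13; vv]>>)%VS.
  by apply: subv_trans W02_W13_sub; rewrite subv_cap sU02.
have eUB : <<[:: p02; p13; vv]>>%VS = U.
  by apply/eqP; rewrite eq_sym eqEdim sUB dU dim_span.
by exfalso; apply: (p02_p13_vv_notin_assoc hU); rewrite -eUB memv_span // !inE eqxx ?orbT.
Qed.

Lemma idem_of_peirce (U : {vspace V}) (w e f : V) : is_assoc_subalgebra U ->
  (U <= <<[:: w; e; f]>>)%VS -> w \in U -> e \in U -> idem e -> e != 0 ->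
  mul e f = 0 -> mul e w \notin <[e]>%VS ->
  exists2 F, F \in U & [/\ idem F, F \notin <[e]>%VS & mul e F = F].
Proof.
move=> [hU hA] sU wU eU he ne hef hu; set u := mul e w in hu.
have uU : u \in U by rewrite hU.
have heu : mul e u = u by rewrite /u -hA // he.
have /span3P [k1 [k2 [k3 hk]]] := subvP sU _ (hU _ _ uU uU).
have huu : mul u u = k1 *: u + k2 *: e.
  by rewrite -{1}heu hA // hk !vmulDr !vmulZr he hef scaler0 addr0.
have [F FS hF] := idem_of_quadratic he ne heu hu huu.
by exists F => //; apply: subvP FS; apply/span_subvP => z; rewrite !inE => /orP [] /eqP ->.
Qed.

Lemma assoc3_peirce (U : {vspace V}) (x : V) : is_assoc_subalgebra U -> one \in U ->
  \dim U = 3%N -> x \in U -> idem x -> x != 0 -> x != one ->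
  exists X F, [/\ X \in U, F \in U, idem X, idem F &
                  [/\ mul X F = F, F \notin <[X]>%VS & X != one]].
Proof.
move=> hU oU dU xU hx nx0 nx1.
have [hy _ hxy _ _] := peirce_triple idem_one hx (one_mul x).
have /subvPn [w wU wn] : ~~ (U <= <<[:: x; one]>>)%VS.
  by apply: contraTN isT => /dimvS; rewrite dU => /leq_trans/(_ (dim_span _)).
have spU : <<[:: w; x; one]>>%VS = U.
  apply: span_free_dim; last by rewrite dU.
    by rewrite free_cons wn free_cons seq1_free one_neq0 span_seq1 idem_notin_line1.
  by move=> z; rewrite !inE => /or3P [] /eqP ->.
have sU : (U <= <<[:: w; x; one - x]>>)%VS.
  rewrite -spU; apply/span_subvP => z; rewrite !inE => /or3P [] /eqP ->;
    try by rewrite memv_span // !inE eqxx ?orbT.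
  by rewrite -[X in X \in _](subrK x) memvD // memv_span // !inE eqxx ?orbT.
have sU' : (U <= <<[:: w; one - x; x]>>)%VS.
  suff -> : <<[:: w; one - x; x]>>%VS = <<[:: w; x; one - x]>>%VS by [].
  by apply: eq_span => z; rewrite !inE; congr (_ || _); exact: orbC.
have [hxw | hxw] := boolP (mul x w \in <[x]>%VS); last first.
  have [F FU [hF Fl hxF]] := idem_of_peirce hU sU wU xU hx nx0 hxy hxw.
  by exists x, F.
have [hyw | hyw] := boolP (mul (one - x) w \in <[one - x]>%VS); last first.
  have yU : one - x \in U by rewrite memvB.
  have ny0 : one - x != 0 by rewrite subr_eq0 eq_sym.
  have hyx : mul (one - x) x = 0 by rewrite vmulC.
  have [F FU [hF Fl hyF]] := idem_of_peirce hU sU' wU yU hy ny0 hyx hyw.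
  exists (one - x), F; split => //; split => //.
  by rewrite subr_eq addrC -subr_eq subrr eq_sym.
exfalso; case/vlineP: hxw => k hk; case/vlineP: hyw => k' hk'.
have ew : w = (k - k') *: x + k' *: one.
  rewrite -[w]one_mul -[one in mul one w](subrK x) vmulDl hk hk' addrC.
  by apply: row5P; rewrite !mxE /=; ring.
by move: wn; rewrite ew => /negP; apply; apply/span2P; do 2 eexists.
Qed.

Lemma assoc3_classification (U : {vspace V}) : is_assoc_subalgebra U -> one \in U ->
  \dim U = 3%N -> U = S02 \/ U = S13.
Proof.
move=> hU oU dU.
have [x xU [hx nx0 nx1]] := assoc3_idem hU oU dU.
have [X [F [XU FU hX hF [hXF Fl nX1]]]] := assoc3_peirce hU oU dU xU hx nx0 nx1.
have [h2 h3 m12 m13 m23] := peirce_triple hX hF hXF.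
have nF : F != 0 by apply: contra Fl => /eqP ->; rewrite mem0v.
have n2 : X - F != 0.
  by rewrite subr_eq0 eq_sym; apply: contra Fl => /eqP ->; rewrite memv_line.
have n3 : one - X != 0 by rewrite subr_eq0 eq_sym.
have hs : F + (X - F) + (one - X) = one by rewrite [F + _]addrC subrK addrC subrK.
have inU f : f \in [:: F; X - F; one - X] -> f \in U.
  by rewrite !inE => /or3P [] /eqP ->; rewrite ?memvB.
have eq_compl e f : e \in [:: F; X - F; one - X] -> f \in [:: F; X - F; one - X] ->
    \dim (compl_span e f) = 3%N -> U = compl_span e f.
  move=> ei fi d3; apply/eqP; rewrite eq_sym eqEdim d3 dU leqnn andbT.
  by apply: compl_span_sub => //; apply: inU.
case: (orth_idem_triple hF h2 h3 nF n2 n3 m12 m13 m23 hs) => [[i0' i2'] | [i1' i3']].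
- by left; apply: eq_compl dim_S02.
- by right; apply: eq_compl dim_S13.
Qed.

Lemma capv_assoc_classification (U W : {vspace V}) : is_assoc_subalgebra U -> one \in U ->
  (4 <= \dim U)%N -> is_subalgebra W -> \dim W = 4%N -> one \in W ->
  [/\ p02 \in W, p13 \in W & vv \in W] -> (U :&: W)%VS = S02 \/ (U :&: W)%VS = S13.
Proof.
move=> [hU1 hU2] oU dU hW dW oW [pW qW vW].
have hUW : is_assoc_subalgebra (U :&: W)%VS.
  split=> [x y /memv_capP [xU xW] /memv_capP [yU yW] | x y z /memv_capP [xU _]
    /memv_capP [yU _] /memv_capP [zU _]]; last exact: hU2.
  by rewrite memv_cap hU1 // hW.
have dUW := dimv_sum_cap U W; have d5 := dimv_le5 (U + W).
have [d3 | ] := eqVneq (\dim (U :&: W)) 3%N.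
  by apply: assoc3_classification => //; rewrite memv_cap oU oW.
move=> n3; exfalso; have sWU : (W <= U)%VS.
  have /eqP <- : (U :&: W)%VS == W by rewrite eqEdim capvSr dW; lia.
  exact: capvSl.
by apply: (p02_p13_vv_notin_assoc (conj hU1 hU2)); apply: (subvP sWU).
Qed.

Lemma assoc_classification (U : {vspace V}) : is_assoc_subalgebra U -> one \in U ->
  (3 <= \dim U)%N -> U = S02 \/ U = S13.
Proof.
move=> hU oU; rewrite leq_eqVlt => /orP [/eqP/esym d3 | d4].
  exact: assoc3_classification.
exfalso.
have [[ax0S ax2S _] [ax1S ax3S _]] := (mem_compl_span ax0 ax2, mem_compl_span ax1 ax3).
have sS13 : (S13 <= U)%VS.
  case: (capv_assoc_classification hU oU d4 W02_subalg dim_W02 one_W02 p02_p13_vv_W02) => e.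
    have : ax0 \in W02 by apply: (subvP (capvSr U W02)); rewrite e.
    by rewrite (negbTE ax0_notin_W02).
  by rewrite -e capvSl.
have sS02 : (S02 <= U)%VS.
  case: (capv_assoc_classification hU oU d4 W13_subalg dim_W13 one_W13 p02_p13_vv_W13) => e.
    by rewrite -e capvSl.
  have : ax1 \in W13 by apply: (subvP (capvSr U W13)); rewrite e.
  by rewrite (negbTE ax1_notin_W13).
have a0 := subvP sS02 _ ax0S; have a2 := subvP sS02 _ ax2S.
have a1 := subvP sS13 _ ax1S; have a3 := subvP sS13 _ ax3S.
apply: (p02_p13_vv_notin_assoc hU); rewrite ?memvD //.
have -> : vv = (5 / 2) *: one - 2 *: (ax0 + ax1 + ax2 + ax3).
  by apply: row5P; rewrite !mxE /=; field.
by rewrite memvB // memvZ // !memvD.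
Qed.

Lemma S_max (S : {vspace V}) : S = S02 \/ S = S13 -> is_max_assoc_subalgebra S.
Proof.
have [[_ _ oS02] [_ _ oS13]] := (mem_compl_span ax0 ax2, mem_compl_span ax1 ax3).
have dimS W : W = S02 \/ W = S13 -> \dim W = 3%N.
  by case=> ->; [exact: dim_S02 | exact: dim_S13].
move=> hS; split; first by case: hS => ->; [exact: S02_assoc | exact: S13_assoc].
have oS : one \in S by case: hS => ->.
move=> W hW sSW; have hW3 : (3 <= \dim W)%N by have := dimvS sSW; rewrite (dimS _ hS).
apply/eqP; rewrite eq_sym eqEdim sSW (dimS _ hS).
by rewrite (dimS _ (assoc_classification hW (subvP sSW _ oS) hW3)).
Qed.

Lemma dim3_nontrivial (U : {vspace V}) : \dim U = 3%N -> ~ is_trivial_subalgebra U.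
Proof.
move=> dU [e [_ [h | h | [x [_ _ _ h]]]]]; move: dU; rewrite h.
- by rewrite dimv0.
- by move=> d; have := dim_vline e; rewrite d; case: (e != 0).
- by move=> d; have := dim_span [:: x; e - x]; rewrite d.
Qed.

Lemma max_nontrivial_classification (U : {vspace V}) : is_max_assoc_subalgebra U ->
  ~ is_trivial_subalgebra U -> U = S02 \/ U = S13.
Proof.
move=> hm nt; have oU := max_assoc_one hm; have [hU _] := hm.
apply: assoc_classification => //; rewrite ltnNge; apply/negP => d2.
exact: nt (unital_assoc_dim_le2 hU oU d2).
Qed.

Lemma S02_coord (z : V) : z \in S02 -> z 0 i1 = 2 * z 0 i4.
Proof. by case/span3P=> [k1 [k2 [k3 ->]]]; rewrite !mxE /=; lra. Qed.

Lemma S13_coord (z : V) : z \in S13 -> z 0 i0 = 2 * z 0 i4.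
Proof. by case/span3P=> [k1 [k2 [k3 ->]]]; rewrite !mxE /=; lra. Qed.

Lemma idem_orth2_coef (e f : V) k1 k2 : idem e -> idem f -> mul e f = 0 ->
  e != 0 -> f != 0 -> idem (k1 *: e + k2 *: f) ->
  (k1 = 0 \/ k1 = 1) /\ (k2 = 0 \/ k2 = 1).
Proof.
move=> he hf hef ne nf; rewrite /Defs.idempotent mul_orth2 // => hk.
have h : (k1 * (k1 - 1)) *: e = (- (k2 * (k2 - 1))) *: f.
  apply/eqP; rewrite -subr_eq0 scaleNr opprK; apply/eqP.
  by move: hk => /(congr1 (fun z => z - (k1 *: e + k2 *: f))); rewrite subrr => <-;
    apply: row5P; rewrite !mxE /=; ring.
have hfe : mul f e = 0 by rewrite vmulC.
have c1 : k1 * (k1 - 1) = 0.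
  move/(congr1 (mul e)): h; rewrite !vmulZr he hef scaler0 => /eqP.
  by rewrite scaler_eq0 (negbTE ne) orbF => /eqP.
have c2 : - (k2 * (k2 - 1)) = 0.
  move/(congr1 (mul f)): h; rewrite !vmulZr hf hfe scaler0 => /esym/eqP.
  by rewrite scaler_eq0 (negbTE nf) orbF => /eqP.
have sol (k : R) : k * (k - 1) = 0 -> k = 0 \/ k = 1.
  by move/mulf_eq0_or => [h0 | h0]; [left | right; lra].
by split; apply: sol => //; lra.
Qed.

(* With [r = n + 1], a rational parametrisation of the idempotents [x] with
   [x0 = x2], [x1 = x3] and [(x, 1) = 2]. *)
Definition fam_r (n : nat) : R := n.+1%:R.
Definition fam_den (n : nat) : R := 2 * fam_r n ^+ 2 + fam_r n + 2.
Definition fam (n : nat) : V :=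
  let r := fam_r n in let d := fam_den n in
  vec (2 * r * (r + 1) / d) (2 * (r + 1) / d) (2 * r * (r + 1) / d) (2 * (r + 1) / d)
      (- (3 * r) / d).

Lemma fam_r_ge1 n : 1 <= fam_r n.
Proof. by rewrite /fam_r ler1n. Qed.

Lemma fam_den_gt0 n : 0 < fam_den n.
Proof. by have := fam_r_ge1 n; rewrite /fam_den => h; nra. Qed.

Lemma fam_idem n : idem (fam n).
Proof.
have := fam_den_gt0 n; have := fam_r_ge1 n; rewrite /fam_den => r1 d0.
rewrite /Defs.idempotent; apply: row5P;
  rewrite /fam !(mul_coord0, mul_coord1, mul_coord2, mul_coord3, mul_coord4, mxE) /=;
  rewrite /mul_poly0 /mul_poly1 /mul_poly2 /mul_poly3 /mul_poly4 /fam_den;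
  by field; apply: lt0r_neq0; nra.
Qed.

Lemma fam_coord0_gt n : 2 / 5 < fam n 0 i0.
Proof.
rewrite /fam mxE /=; have := fam_den_gt0 n; have := fam_r_ge1 n => r1 d0.
rewrite -subr_gt0 (_ : _ - _ =
  (2 * fam_r n * (fam_r n + 1) - 2 / 5 * fam_den n) / fam_den n).
  by rewrite divr_gt0 // /fam_den; nra.
by field; rewrite gt_eqF.
Qed.

Lemma fam_coord01 n : fam n 0 i0 = fam_r n * fam n 0 i1.
Proof. by rewrite /fam !mxE /=; field; rewrite gt_eqF ?fam_den_gt0. Qed.

Lemma fam_coord1_gt0 n : 0 < fam n 0 i1.
Proof.
rewrite /fam mxE /= divr_gt0 ?fam_den_gt0 //.
by have := fam_r_ge1 n; lra.
Qed.

Lemma fam_neq0 n : fam n != 0.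
Proof. by apply: (@vec_neq0 _ i1); rewrite gt_eqF // fam_coord1_gt0. Qed.

Lemma fam_neq1 n : fam n != one.
Proof.
apply/eqP => /(congr1 (fun z : V => z 0 i4)); rewrite /fam !mxE /=.
have := fam_den_gt0 n; have := fam_r_ge1 n => r1 d0.
suff : - (3 * fam_r n) / fam_den n < 0 by lra.
by rewrite mulNr oppr_lt0 divr_gt0 //; lra.
Qed.

Lemma fam_notin_S (n : nat) : fam n \notin S02 /\ fam n \notin S13.
Proof.
have := fam_den_gt0 n; have := fam_r_ge1 n; set r := fam_r n; set d := fam_den n => r1 d0.
have clear_den (a b : R) : a / d = 2 * (b / d) -> a = 2 * b.
  by move=> h; have := congr1 ( *%R^~ d) h; rewrite mulrA !mulfVK ?gt_eqF.
split; apply/negP.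
- by move=> /S02_coord; rewrite /fam !mxE /= => /clear_den; lra.
- by move=> /S13_coord; rewrite /fam !mxE /= => /clear_den; nra.
Qed.

Definition fam_sub (n : nat) : {vspace V} := <<[:: fam n; one - fam n]>>%VS.

Lemma fam_compl n :
  [/\ idem (one - fam n), mul (fam n) (one - fam n) = 0 & one - fam n != 0].
Proof.
have [hy _ hxy _ _] := peirce_triple idem_one (fam_idem n) (one_mul (fam n)).
by split => //; rewrite subr_eq0 eq_sym fam_neq1.
Qed.

Lemma dim_fam_sub n : \dim (fam_sub n) = 2%N.
Proof.
have [hy hxy ny] := fam_compl n.
by apply/eqP; exact: (free_orth2 (fam_idem n) hy (fam_neq0 n) ny hxy).
Qed.

Lemma fam_sub_max n : is_max_assoc_subalgebra (fam_sub n).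
Proof.
have [hy hxy ny] := fam_compl n.
split; first exact: assoc_orth2 (fam_idem n) hy hxy.
move=> W hW sub.
have xW : fam n \in W by apply: (subvP sub); rewrite memv_span // !inE eqxx.
have yW : one - fam n \in W by apply: (subvP sub); rewrite memv_span // !inE eqxx orbT.
have oW : one \in W by rewrite -(subrK (fam n) one) memvD.
have [d3 | d2] := leqP 3 (\dim W).
  have [nS02 nS13] := fam_notin_S n.
  case: (assoc_classification hW oW d3) => eW; rewrite eW in xW.
  - by rewrite xW in nS02.
  - by rewrite xW in nS13.
by apply/eqP; rewrite eq_sym eqEdim sub dim_fam_sub -ltnS.
Qed.

Lemma fam_sub_inj : injective fam_sub.
Proof.
move=> n m e.
have [hy hxy ny] := fam_compl n.
have /span2P [k1 [k2 hk]] : fam m \in fam_sub n by rewrite e memv_span // !inE eqxx.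
have hm : idem (k1 *: fam n + k2 *: (one - fam n)) by rewrite -hk; exact: fam_idem.
have [[] hk1 [] hk2] := idem_orth2_coef (fam_idem n) hy hxy (fam_neq0 n) ny hm;
  rewrite {}hk1 {}hk2 ?scale0r ?scale1r ?addr0 ?add0r in hk.
- by move: (fam_neq0 m); rewrite hk eqxx.
- have e0 : (one - fam n) 0 i0 = 4 / 5 - fam n 0 i0 by rewrite !mxE.
  by exfalso; have := fam_coord0_gt m; have := fam_coord0_gt n; rewrite hk e0; lra.
- have := fam_coord01 m; rewrite hk fam_coord01 => /(mulIf (lt0r_neq0 (fam_coord1_gt0 n))).
  by move/eqP; rewrite /fam_r eqr_nat eqSS => /eqP.
- by move: (fam_neq1 m); rewrite hk addrC subrK eqxx.
Qed.

End V4ASubalgebras.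

Theorem mainTheorem10 (R : realType) :
  (~ exists s : seq {vspace V4A R},
       forall U : {vspace V4A R}, is_max_assoc_subalgebra U -> U \in s) /\
  (exists U1 U2 : {vspace V4A R},
     [/\ U1 != U2,
         is_max_assoc_subalgebra U1 /\ ~ is_trivial_subalgebra U1,
         is_max_assoc_subalgebra U2 /\ ~ is_trivial_subalgebra U2 &
         forall U : {vspace V4A R},
           is_max_assoc_subalgebra U -> ~ is_trivial_subalgebra U ->
           U = U1 \/ U = U2]).
Proof.
split; first exact: inj_family_not_finite (@fam_sub_inj R) (@fam_sub_max R).
exists (S02 R), (S13 R); split.
- exact: S02_neq_S13.
- by split; [apply: S_max; left | apply/dim3_nontrivial/dim_S02].
- by split; [apply: S_max; right | apply/dim3_nontrivial/dim_S13].
- exact: max_nontrivial_classification.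
Qed.
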